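(* Assume the incoherence condition A3 with parameter $\alpha\in(0,1]$, and let $\lambda>0$. If $$\max\{\|\mathbf W\|_\infty,\ \|R(\dot\Delta)\|_\infty\}\le\frac{\alpha\lambda}{8},$$ then $|\dot Z_{qr}|<1$ for all $(q,r)\in\mathcal M^\perp$, and consequently $\dot{\boldsymbol\Theta}=\hat{\boldsymbol\Theta}_G$.
   Context: Let $\mathbf S\in\mathbb C^{p\times p}$ be Hermitian positive definite, $\boldsymbol\Theta^*=\mathbf S^{-1}$, and $\hat{\mathbf S}$ Hermitian positive semidefinite. $\hat{\boldsymbol\Theta}_G$ is the unique minimiser of $-\log\det\boldsymbol\Theta+\operatorname{Tr}(\hat{\mathbf S}\boldsymbol\Theta)+\lambda\sum_{q,r}|\Theta_{qr}|$ over Hermitian positive definite $\boldsymbol\Theta$. Let $E(\boldsymbol\Theta^* )=\{(q,r):\Theta^*_{qr}\ne0,q\ne r\}$, $\mathcal M=E(\boldsymbol\Theta^* )\cup\{(q,q)\}_{q=1}^p$, $\mathcal M^\perp$ its complement. Witness: $\dot{\boldsymbol\Theta}$ is the minimiser of the same objective over Hermitian positive definite $\boldsymbol\Theta$ with $\Theta_{qr}=0$ for $(q,r)\in\mathcal M^\perp$; $\dot{\mathbf Z}$ has entries on $\mathcal M$ given by a subgradient of $\sum|\Theta_{qr}|$ at $\dot{\boldsymbol\Theta}$ ($\dot Z_{qq}=1$, $\dot Z_{qr}=\dot\Theta_{qr}/|\dot\Theta_{qr}|$ if nonzero, modulus $\le1$ otherwise) satisfying $\hat{\mathbf S}_{\mathcal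 M}-(\dot{\boldsymbol\Theta}^{-1})_{\mathcal M}+\lambda\dot{\mathbf Z}_{\mathcal M}=0$, and on $\mathcal M^\perp$ defined by $\dot Z_{qr}=\lambda^{-1}(-\hat S_{qr}+(\dot{\boldsymbol\Theta}^{-1})_{qr})$. Set $\mathbf W=\hat{\mathbf S}-\mathbf S$, $\dot\Delta=\dot{\boldsymbol\Theta}-\boldsymbol\Theta^*$, $R(\dot\Delta)=\dot{\boldsymbol\Theta}^{-1}-\boldsymbol\Theta^{*-1}+\boldsymbol\Theta^{*-1}\dot\Delta\boldsymbol\Theta^{*-1}$. $\|\mathbf A\|_\infty=\max_{q,r}|A_{qr}|$. Hessian $\Gamma=\overline{\mathbf S}\otimes\mathbf S$ indexed by pairs $(q,r)$ (column-stacking vectorisation, $\operatorname{vec}(\mathbf S\Delta\mathbf S)=\Gamma\operatorname{vec}\Delta$), $\Gamma_{AB}$ its submatrix with rows in $A$ and columns in $B$. A3: $\max_{e\in\mathcal M^\perp}\|\Gamma_{e\mathcal M}(\Gamma_{\mathcal M\mathcal M})^{-1}\|_1\le1-\alpha$, with $\|\cdot\|_1$ the sum of moduli of the row's entries. *)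

From HB Require Import structures.
From mathcomp Require Import all_boot all_order all_algebra.
From mathcomp Require Import complex.
From mathcomp Require Import reals exp.
Set Implicit Arguments. Unset Strict Implicit. Unset Printing Implicit Defensive.
Import Order.TTheory GRing.Theory Num.Theory.
Local Open Scope ring_scope.

Section Defs.
Variable R : realType.
Local Notation C := (R[i]).
Variable p : nat.

Definition cmod (z : C) : R := complex.Re `|z|.

Definition hermitian (A : 'M[C]_p) : Prop :=
  forall i j : 'I_p, A j i = conjc (A i j).

Definition qform (A : 'M[C]_p) (v : 'cV[C]_p) : C :=
  \sum_(i < p) \sum_(j < p) conjc (v i 0) * A i j * v j 0.

Definition hpd (A : 'M[C]_p) : Prop :=
  hermitian A /\ forall v : 'cV[C]_p, v != 0 -> 0 < qform A v.
Definition hpsd (A : 'M[C]_p) : Prop :=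
  hermitian A /\ forall v : 'cV[C]_p, 0 <= qform A v.

Definition maxnorm (A : 'M[C]_p) : R :=
  \big[Num.max/0]_(q < p) \big[Num.max/0]_(r < p) cmod (A q r).

(* graphical-lasso objective
   -log det Theta + Tr(Sh Theta) + lam * sum_{q,r} |Theta_{qr}|
   (det and trace are real for Hermitian Theta, Sh; we take real parts) *)
Definition glasso_obj (Sh : 'M[C]_p) (lam : R) (Th : 'M[C]_p) : R :=
  - ln (complex.Re (\det Th)) + complex.Re (\tr (Sh *m Th))
  + lam * \sum_(q < p) \sum_(r < p) cmod (Th q r).

Definition is_glasso_min (Sh : 'M[C]_p) (lam : R) (Th : 'M[C]_p) : Prop :=
  hpd Th /\ forall Th' : 'M[C]_p, hpd Th' ->
    glasso_obj Sh lam Th <= glasso_obj Sh lam Th'.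

Definition inM (Thstar : 'M[C]_p) (e : 'I_p * 'I_p) : bool :=
  (e.1 == e.2) || (Thstar e.1 e.2 != 0).

Definition is_restricted_min (Thstar Sh : 'M[C]_p) (lam : R) (Th : 'M[C]_p)
  : Prop :=
  [/\ hpd Th,
      (forall q r, ~~ inM Thstar (q, r) -> Th q r = 0) &
      forall Th' : 'M[C]_p, hpd Th' ->
        (forall q r, ~~ inM Thstar (q, r) -> Th' q r = 0) ->
        glasso_obj Sh lam Th <= glasso_obj Sh lam Th'].

(* Hessian Gamma = conj(S) (x) S indexed by pairs (q,r), column-stacking:
   Gamma_{(q,r),(q',r')} = conj(S_{r r'}) * S_{q q'} *)
Definition Gamma (S : 'M[C]_p) (e f : 'I_p * 'I_p) : C :=
  conjc (S e.2 f.2) * S e.1 f.1.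

Definition Mset (Thstar : 'M[C]_p) : {set 'I_p * 'I_p} :=
  [set e | inM Thstar e].

Definition Gamma_MM (S Thstar : 'M[C]_p) : 'M[C]_#|Mset Thstar| :=
  \matrix_(i, j) Gamma S (enum_val i) (enum_val j).

Definition Gamma_eM (S Thstar : 'M[C]_p) (e : 'I_p * 'I_p)
  : 'rV[C]_#|Mset Thstar| :=
  \row_j Gamma S e (enum_val j).

Definition incoherence (S Thstar : 'M[C]_p) (alpha : R) : Prop :=
  forall e : 'I_p * 'I_p, ~~ inM Thstar e ->
    \sum_j cmod ((Gamma_eM S Thstar e *m invmx (Gamma_MM S Thstar)) 0 j)
      <= 1 - alpha.

Definition remainder (Thstar Thd : 'M[C]_p) : 'M[C]_p :=
  invmx Thd - invmx Thstar
  + invmx Thstar *m (Thd - Thstar) *m invmx Thstar.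

End Defs.

(* Primal-dual witness.  Off M the witness Zd is defined by the KKT residual, so
   Sh = Thd^-1 - lam Zd holds entrywise, and with Delta = Thd - Thstar (supported on M) the
   definition of R(Delta) turns this into  S Delta S = U := R(Delta) - W - lam Zd.  On M this
   reads Gamma_MM vec(Delta) = vec(U); at e outside M it gives U_e = Gamma_eM Gamma_MM^-1 vec(U).
   Since |U| <= lam + alpha lam/4 on M, A3 yields
   lam |Zd_e| <= alpha lam/4 + (1 - alpha)(lam + alpha lam/4) < lam.
   Hence |Zd| <= 1 everywhere and Tr(Zd Thd) = sum |Thd_qr|, so the objective at any Hermitian
   positive definite Th exceeds its value at Thd by at least
   Tr(Thd^-1 Th) - p - ln det(Thd^-1 Th) >= 0, with equality only at Th = Thd.  This log-det
   inequality, the Cholesky factorisation, and through it the invertibility of Gamma_MM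
   (whose quadratic form is ||L X L^H||^2 for S = L^H L) all come from induction on the
   dimension via the Schur complement of the top-left entry. *)

From Pilot Require Import Defs.
From HB Require Import structures.
From mathcomp Require Import all_boot all_order all_algebra.
From mathcomp Require Import complex.
From mathcomp Require Import reals exp ring lra.
Import Order.TTheory GRing.Theory Num.Theory.
Set Implicit Arguments. Unset Strict Implicit. Unset Printing Implicit Defensive.
Local Open Scope complex_scope.
Local Open Scope ring_scope.

Section ConjugateTranspose.
Variable R : rcfType.
Local Notation C := R[i].

Definition ctmx m n (A : 'M[C]_(m, n)) : 'M[C]_(n, m) := (map_mx conjc A)^T.

Lemma ctmxE m n (A : 'M[C]_(m, n)) i j : ctmx A i j = conjc (A j i).
Proof. by rewrite !mxE. Qed.

Lemma ctmxK m n (A : 'M[C]_(m, n)) : ctmx (ctmx A) = A.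
Proof. by apply/matrixP=> i j; rewrite !ctmxE conjcK. Qed.

Lemma ctmx_mul m n k (A : 'M[C]_(m, n)) (B : 'M[C]_(n, k)) :
  ctmx (A *m B) = ctmx B *m ctmx A.
Proof. by rewrite /ctmx map_mxM trmx_mul. Qed.

Lemma ctmx0 m n : ctmx (0 : 'M[C]_(m, n)) = 0.
Proof. by rewrite /ctmx map_mx0 trmx0. Qed.

Lemma ctmxZ m n (a : C) (A : 'M[C]_(m, n)) : ctmx (a *: A) = conjc a *: ctmx A.
Proof. by apply/matrixP=> i j; rewrite !(ctmxE, mxE) rmorphM. Qed.

Lemma ctmx_scalar n (a : C) : ctmx (a%:M : 'M_n) = (conjc a)%:M.
Proof. by rewrite /ctmx map_scalar_mx tr_scalar_mx. Qed.

Lemma ctmx1 n : ctmx (1%:M : 'M[C]_n) = 1%:M.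
Proof. by rewrite ctmx_scalar conjc1. Qed.

Lemma ctmx_block m1 m2 n1 n2 (A : 'M[C]_(m1, n1)) (B : 'M[C]_(m1, n2))
    (D : 'M[C]_(m2, n1)) (E : 'M[C]_(m2, n2)) :
  ctmx (block_mx A B D E) = block_mx (ctmx A) (ctmx D) (ctmx B) (ctmx E).
Proof. by rewrite /ctmx map_block_mx tr_block_mx. Qed.

Lemma ctmx_col m1 m2 n (A : 'M[C]_(m1, n)) (B : 'M[C]_(m2, n)) :
  ctmx (col_mx A B) = row_mx (ctmx A) (ctmx B).
Proof. by rewrite /ctmx map_col_mx tr_col_mx. Qed.

Lemma det_ctmx n (A : 'M[C]_n) : \det (ctmx A) = conjc (\det A).
Proof. by rewrite /ctmx det_tr (det_map_mx (conjc : {rmorphism C -> C})). Qed.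

Lemma unitmx_ctmx n (A : 'M[C]_n) : (ctmx A \in unitmx) = (A \in unitmx).
Proof. by rewrite !unitmxE det_ctmx fmorph_unit. Qed.

Lemma ctmx_inv n (A : 'M[C]_n) : ctmx (invmx A) = invmx (ctmx A).
Proof. by rewrite /ctmx map_invmx trmx_inv. Qed.

End ConjugateTranspose.

Section RealPart.
Variable R : rcfType.
Local Notation C := R[i].
Local Notation Re := (@complex.Re R).

Lemma ReD (x y : C) : Re (x + y) = Re x + Re y.
Proof. by case: x; case: y. Qed.

Lemma ReN (x : C) : Re (- x) = - Re x.
Proof. by case: x. Qed.

Lemma ReMR (r : R) (x : C) : Re (r%:C * x) = r * Re x.
Proof. by case: x => a b /=; ring. Qed.

Lemma pos_complexE (x : C) : 0 < x -> x = (Re x)%:C /\ 0 < Re x.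
Proof. by case: x => a b; rewrite ltcE /= => /andP [/eqP -> ha]. Qed.

Lemma conjc_gt0 (x : C) : 0 < x -> conjc x = x.
Proof. by move=> /pos_complexE [-> _]; rewrite conjc_real. Qed.

End RealPart.

Section ComplexModulus.
Variable R : realType.
Local Notation C := R[i].
Local Notation Re := (@complex.Re R).

Lemma cmodE (z : C) : `|z| = (cmod z)%:C.
Proof. by rewrite /cmod normc_def. Qed.

Lemma cmod_ge0 (z : C) : 0 <= cmod z.
Proof. by have := normr_ge0 z; rewrite cmodE ler0c. Qed.

Lemma cmod_eq0 (z : C) : (cmod z == 0) = (z == 0).
Proof. by rewrite -(inj_eq (@complexI R)) -cmodE normr_eq0. Qed.

Lemma cmodD (x y : C) : cmod (x + y) <= cmod x + cmod y.
Proof. by have := ler_normD x y; rewrite !cmodE -rmorphD lecR. Qed.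

Lemma cmodM (x y : C) : cmod (x * y) = cmod x * cmod y.
Proof. by apply: complexI; rewrite rmorphM -!cmodE normrM. Qed.

Lemma cmodN (x : C) : cmod (- x) = cmod x.
Proof. by apply: complexI; rewrite -!cmodE normrN. Qed.

Lemma cmodR (a : R) : cmod a%:C = `|a|.
Proof. by rewrite /cmod normc_def /= expr0n /= addr0 sqrtr_sqr. Qed.

Lemma cmod_sum (I : finType) (F : I -> C) :
  cmod (\sum_i F i) <= \sum_i cmod (F i).
Proof.
elim/big_ind2: _ => [|x1 x2 y1 y2 h1 h2|//]; first by rewrite cmodR normr0.
exact: le_trans (cmodD _ _) (lerD h1 h2).
Qed.

Lemma Re_le_cmod (z : C) : Re z <= cmod z.
Proof. by have := normc_ge_Re z; rewrite cmodE lecR; apply: le_trans (ler_norm _). Qed.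

Lemma cmod_mulmx_le n (c : 'rV[C]_n) (v : 'cV[C]_n) (b : R) :
  (forall j, cmod (v j 0) <= b) -> 0 <= b ->
  cmod ((c *m v) 0 0) <= (\sum_j cmod (c 0 j)) * b.
Proof.
move=> hv hb; rewrite mxE mulr_suml; apply: le_trans (cmod_sum _) _.
by apply: ler_sum => j _; rewrite cmodM ler_wpM2l ?cmod_ge0.
Qed.

Lemma cmod_le_maxnorm p (A : 'M[C]_p) q r : cmod (A q r) <= maxnorm A.
Proof.
rewrite /maxnorm (bigD1 q) //= (bigD1 r) //=.
by rewrite le_max (le_max _ (cmod (A q r))) lexx.
Qed.

End ComplexModulus.

Section PositiveDefinite.
Variable R : realType.
Local Notation C := R[i].

Lemma qformE n (A : 'M[C]_n) v : qform A v = (ctmx v *m A *m v) 0 0.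
Proof.
rewrite /qform mxE exchange_big; apply: eq_bigr=> j _.
by rewrite mxE mulr_suml; apply: eq_bigr=> i _; rewrite ctmxE.
Qed.

Lemma hermitianE n (A : 'M[C]_n) : Defs.hermitian A <-> ctmx A = A.
Proof.
split=> [h|h i j]; first by apply/matrixP=> i j; rewrite ctmxE h conjcK.
by rewrite -{1}h ctmxE.
Qed.

Lemma hpdE n (A : 'M[C]_n) : hpd A <->
  ctmx A = A /\ forall v : 'cV[C]_n, v != 0 -> 0 < (ctmx v *m A *m v) 0 0.
Proof.
rewrite /hpd hermitianE.
by split=> -[h1 h2]; split=> // v /h2; rewrite qformE.
Qed.

Lemma hpd_ctmx n (A : 'M[C]_n) : hpd A -> ctmx A = A.
Proof. by case/hpdE. Qed.

Lemma posdef_unitmx n (A : 'M[C]_n) :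
  (forall v : 'cV[C]_n, v != 0 -> 0 < (ctmx v *m A *m v) 0 0) ->
  A \in unitmx.
Proof.
move=> hA; rewrite unitmxE unitfE; apply/negP => /det0P [v hv hvA].
have hv' : ctmx v != 0 by apply: contra hv => /eqP h; rewrite -(ctmxK v) h ctmx0.
by have := hA _ hv'; rewrite ctmxK hvA mul0mx mxE ltxx.
Qed.

Lemma hpd_unitmx n (A : 'M[C]_n) : hpd A -> A \in unitmx.
Proof. by move=> /hpdE [_]; apply: posdef_unitmx. Qed.

Lemma hpd_congr n (A L : 'M[C]_n) : hpd A -> L \in unitmx ->
  hpd (ctmx L *m A *m L).
Proof.
move=> /hpdE [hA hApos] hL; apply/hpdE; split.
  by rewrite !ctmx_mul ctmxK hA mulmxA.
move=> v hv; have hLv : L *m v != 0.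
  by apply: contra hv => /eqP h; rewrite -(mulKmx hL v) h mulmx0.
by have := hApos _ hLv; rewrite ctmx_mul !mulmxA.
Qed.

Lemma hpd_diag_gt0 n (A : 'M[C]_n) q : hpd A -> 0 < A q q.
Proof.
move=> [_ hA]; pose v : 'cV[C]_n := \col_i (i == q)%:R.
have hv : v != 0.
  by apply/negP => /eqP /matrixP /(_ q 0); rewrite !mxE eqxx => /eqP; rewrite oner_eq0.
have := hA v hv; rewrite /qform (bigD1 q) //= [X in _ + X]big1 ?addr0; last first.
  by move=> i hi; apply: big1 => j _; rewrite !mxE (negbTE hi) rmorph0 !mul0r.
rewrite (bigD1 q) //= [X in _ + X]big1 ?addr0; last first.
  by move=> j hj; rewrite !mxE (negbTE hj) mulr0.
by rewrite !mxE eqxx conjc1 mul1r mulr1.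
Qed.

Lemma mxtrace_ctmx_mul m n (B : 'M[C]_(m, n)) :
  \tr (ctmx B *m B) = (\sum_i \sum_j cmod (B j i) ^+ 2)%:C.
Proof.
rewrite /mxtrace rmorph_sum; apply: eq_bigr=> i _.
rewrite mxE rmorph_sum; apply: eq_bigr=> j _.
rewrite ctmxE (_ : _ * _ = `|B j i| ^+ 2) ?cmodE ?rmorphXn //.
by rewrite sqr_normc mulrC.
Qed.

Lemma sum_sqr_cmod_eq0 m n (B : 'M[C]_(m, n)) :
  (\sum_i \sum_j cmod (B j i) ^+ 2 == 0) = (B == 0).
Proof.
have hge0 i : 0 <= \sum_j cmod (B j i) ^+ 2 by apply: sumr_ge0 => j _; apply: sqr_ge0.
apply/idP/eqP => [|->]; last first.
  by rewrite big1 // => i _; rewrite big1 // => j _; rewrite mxE cmodR normr0 expr0n.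
rewrite psumr_eq0 // => /allP hB; apply/matrixP=> j i; rewrite mxE.
move: (hB i (mem_index_enum _)); rewrite psumr_eq0 => [|k _]; last exact: sqr_ge0.
by move=> /allP /(_ j (mem_index_enum _)); rewrite sqrf_eq0 cmod_eq0 => /eqP.
Qed.

Lemma mxtrace_ctmx_mul_gt0 m n (B : 'M[C]_(m, n)) : B != 0 -> 0 < \tr (ctmx B *m B).
Proof.
rewrite mxtrace_ctmx_mul ltcR lt_def -sum_sqr_cmod_eq0 => -> /=.
by apply: sumr_ge0 => i _; apply: sumr_ge0 => j _; apply: sqr_ge0.
Qed.

End PositiveDefinite.

Section SchurComplement.
Variable R : realType.
Local Notation C := R[i].
Variable n : nat.
Implicit Type A : 'M[C]_(1 + n).

Definition pivot A : C := ulsubmx A 0 0.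
Definition schur A : 'M[C]_n :=
  drsubmx A - (pivot A)^-1 *: (ctmx (ursubmx A) *m ursubmx A).
Definition schur_elim A : 'M[C]_(1 + n) :=
  block_mx 1%:M ((pivot A)^-1 *: ursubmx A) 0 1%:M.
Definition schur_diag A : 'M[C]_(1 + n) :=
  block_mx (pivot A)%:M 0 0 (schur A).

Lemma pivot_gt0 A : hpd A -> 0 < pivot A.
Proof.
move=> /hpdE [_ hA].
have hv : col_mx (1%:M : 'M[C]_1) (0 : 'M[C]_(n, 1)) != 0.
  by rewrite col_mx_eq0 negb_and oner_neq0.
have := hA _ hv; rewrite ctmx_col ctmx0 ctmx1 -[A]submxK.
rewrite mul_row_block mul_row_col !mul1mx !mul0mx !addr0.
by rewrite mulmx1 mulmx0 addr0 /pivot submxK.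
Qed.

Lemma hermitian_blocks A : ctmx A = A ->
  dlsubmx A = ctmx (ursubmx A) /\ ctmx (drsubmx A) = drsubmx A.
Proof.
by rewrite -{1 2}[A]submxK ctmx_block => /eq_block_mx [_ _ <- ->].
Qed.

Lemma schur_elim_unit A : schur_elim A \in unitmx.
Proof. by rewrite unitmxE det_ublock !det1 mulr1 unitr1. Qed.

Lemma schur_factor A : hpd A -> A = ctmx (schur_elim A) *m schur_diag A *m schur_elim A.
Proof.
move=> hA; have ha := pivot_gt0 hA; have ha0 : pivot A != 0 by rewrite gt_eqF.
have [hdl _] := hermitian_blocks (hpd_ctmx hA).
rewrite /schur_elim /schur_diag ctmx_block ctmx1 ctmx0 ctmxZ conjc_inv.
rewrite conjc_gt0 // mulmx_block !mul1mx !mul0mx !mulmx0 !addr0 add0r.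
rewrite -scalemxAl mul_mx_scalar scalerA mulVf // scale1r.
rewrite ctmx1 mulmx_block !mul1mx !mulmx1 !mul0mx !addr0.
rewrite mul_scalar_mx scalerA mulfV // scale1r -scalemxAr /schur addrCA subrr addr0.
by rewrite mulmx0 addr0 -hdl -mx11_scalar submxK.
Qed.

Lemma schur_diag_hpd A : hpd A -> hpd (schur_diag A).
Proof.
move=> hA; have hP := schur_elim_unit A.
have -> : schur_diag A = ctmx (invmx (schur_elim A)) *m A *m invmx (schur_elim A).
  have := schur_factor hA; set P := schur_elim A; set D := schur_diag A => ->.
  by rewrite ctmx_inv !mulmxA mulVmx ?unitmx_ctmx // mul1mx mulmxK.
by apply: hpd_congr; rewrite ?unitmx_inv.
Qed.

Lemma schur_hpd A : hpd A -> hpd (schur A).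
Proof.
move=> /schur_diag_hpd /hpdE [hD hDpos]; apply/hpdE; split.
  by move: hD; rewrite /schur_diag ctmx_block => /eq_block_mx [].
move=> v hv; have hw : col_mx (0 : 'M[C]_(1, 1)) v != 0.
  by rewrite col_mx_eq0 negb_and hv orbT.
have := hDpos _ hw; rewrite ctmx_col ctmx0 /schur_diag mul_row_block mul_row_col.
by rewrite !(mul0mx, mulmx0, add0r, addr0).
Qed.

Lemma det_schur A : hpd A -> \det A = pivot A * \det (schur A).
Proof.
move=> hA; rewrite {1}(schur_factor hA) !det_mulmx det_ctmx.
rewrite /schur_elim /schur_diag !det_ublock !det1 det_scalar1.
by rewrite mulr1 conjc1 mul1r mulr1.
Qed.

Lemma mxtrace_schur A : \tr A =
  pivot A + \tr (schur A) + (pivot A)^-1 * \tr (ctmx (ursubmx A) *m ursubmx A).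
Proof.
rewrite -{1}[A]submxK mxtrace_block /schur mxtraceD -scaleNr mxtraceZ.
by rewrite [ulsubmx A]mx11_scalar mxtrace_scalar /pivot; ring.
Qed.

End SchurComplement.

Section LogDet.
Variable R : realType.
Local Notation C := R[i].
Local Notation Re := (@complex.Re R).

Lemma hpd_cholesky n (A : 'M[C]_n) : hpd A ->
  exists2 L : 'M[C]_n, L \in unitmx & A = ctmx L *m L.
Proof.
elim: n A => [|n IH] A hA.
  by exists 1%:M; rewrite ?unitmx1 //; apply/matrixP=> -[].
move: A hA; rewrite -[n.+1]add1n => A hA.
have [ha ha_gt0] := pos_complexE (pivot_gt0 hA).
have [L hL hSL] := IH _ (schur_hpd hA).
pose s := (Num.sqrt (Re (pivot A)))%:C.
pose K : 'M[C]_(1 + n) := block_mx s%:M 0 0 L.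
have hK : schur_diag A = ctmx K *m K.
  rewrite /K ctmx_block !ctmx0 ctmx_scalar mulmx_block.
  rewrite !(mulmx0, mul0mx, addr0, add0r) -hSL -scalar_mxM /s conjc_real.
  by rewrite -rmorphM -expr2 sqr_sqrtr ?ltW // /schur_diag {1}ha.
exists (K *m schur_elim A); last by rewrite {1}(schur_factor hA) hK ctmx_mul !mulmxA.
have hdetK : \det K = s * \det L by rewrite det_ublock det_scalar1.
rewrite unitmx_mul schur_elim_unit andbT unitmxE hdetK.
by rewrite unitrM -unitmxE hL andbT unitfE /s (inj_eq (@complexI R)) sqrtr_eq0 -ltNge.
Qed.

Lemma det_hpd_gt0 n (A : 'M[C]_n) : hpd A -> 0 < \det A.
Proof.
move=> /hpd_cholesky [L hL ->]; rewrite det_mulmx det_ctmx.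
by rewrite mulrC -sqr_normc exprn_gt0 // normr_gt0 -unitfE -unitmxE.
Qed.

Lemma ln_le_subr1 (x : R) : 0 < x -> ln x <= x - 1.
Proof. by move=> hx; rewrite lerBrDl -[leRHS]lnK ?posrE // expR_ge1Dx. Qed.

Lemma ln_eq_subr1 (x : R) : 0 < x -> x - 1 <= ln x -> x = 1.
Proof.
move=> hx hle; have [h0|h0] := eqVneq (ln x) 0.
  by apply/eqP; rewrite -(ln_eq0 hx) h0.
by have := expR_gt1Dx h0; rewrite lnK ?posrE //; lra.
Qed.

Lemma logdet_le_mxtrace n (A : 'M[C]_n) : hpd A ->
  ln (Re (\det A)) <= Re (\tr A) - n%:R /\
  (Re (\tr A) - n%:R <= ln (Re (\det A)) -> A = 1%:M).
Proof.
elim: n A => [|n IH] A hA.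
  rewrite det_mx00 /mxtrace big_ord0 ln1 subrr.
  by split=> // _; apply/matrixP=> -[].
move: A hA; rewrite -[n.+1]add1n => A hA.
have hS := schur_hpd hA.
have [IHle IHeq] := IH _ hS.
have [ha ha_gt0] := pos_complexE (pivot_gt0 hA).
have [hd hd_gt0] := pos_complexE (det_hpd_gt0 hS).
set a := Re (pivot A) in ha ha_gt0; set d := Re (\det (schur A)) in hd hd_gt0 IHle IHeq.
set T := \sum_i \sum_j cmod (ursubmx A j i) ^+ 2.
have hT_ge0 : 0 <= a^-1 * T.
  apply: mulr_ge0; first by rewrite invr_ge0 ltW.
  by apply: sumr_ge0 => i _; apply: sumr_ge0 => j _; apply: sqr_ge0.
have hdet : ln (Re (\det A)) = ln a + ln d.
  by rewrite (det_schur hA) ha hd -rmorphM /= lnM.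
have htr : Re (\tr A) = a + Re (\tr (schur A)) + a^-1 * T.
  by rewrite (mxtrace_schur A) mxtrace_ctmx_mul ha -fmorphV -rmorphM !ReD.
have hn : (1 + n)%:R = n%:R + 1 :> R by rewrite natrD addrC.
have ha1 := ln_le_subr1 ha_gt0.
rewrite hdet htr hn; split=> [|heq]; first lra.
have a1 : a = 1 by apply: ln_eq_subr1; lra.
have S1 : schur A = 1%:M by apply: IHeq; lra.
have u0 : ursubmx A = 0.
  apply/eqP; rewrite -sum_sqr_cmod_eq0 -/T; apply/eqP.
  by move: heq hT_ge0; rewrite a1 invr1 mul1r ln1; lra.
have [hdl _] := hermitian_blocks (hpd_ctmx hA).
have hul : ulsubmx A = 1%:M by rewrite [ulsubmx A]mx11_scalar -/(pivot A) ha a1.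
have hdr : drsubmx A = 1%:M by rewrite -S1 /schur u0 mulmx0 scaler0 subr0.
by rewrite -[A]submxK hul hdl u0 ctmx0 hdr -scalar_mx_block.
Qed.

Lemma logdet_ratio_le n (Th Th' : 'M[C]_n) : hpd Th -> hpd Th' ->
  ln (Re (\det Th')) - ln (Re (\det Th)) <= Re (\tr (invmx Th *m Th')) - n%:R /\
  (Re (\tr (invmx Th *m Th')) - n%:R <= ln (Re (\det Th')) - ln (Re (\det Th)) ->
   Th' = Th).
Proof.
move=> hTh hTh'; have [L hL hThL] := hpd_cholesky hTh.
pose A := ctmx (invmx L) *m Th' *m invmx L.
have hA : hpd A by apply: hpd_congr; rewrite ?unitmx_inv.
have hTh'A : Th' = ctmx L *m A *m L.
  by rewrite /A ctmx_inv !mulmxA mulmxV ?unitmx_ctmx // mul1mx mulmxKV.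
have [hdetA hdetA_gt0] := pos_complexE (det_hpd_gt0 hA).
have [hdet hdet_gt0] := pos_complexE (det_hpd_gt0 hTh).
have hlndet : ln (Re (\det A)) = ln (Re (\det Th')) - ln (Re (\det Th)).
  have -> : \det Th' = \det A * \det Th.
    by rewrite hTh'A hThL !det_mulmx mulrAC mulrC mulrA.
  by rewrite hdetA hdet -rmorphM /= lnM ?posrE // addrK.
have htr : \tr A = \tr (invmx Th *m Th').
  have hThu : Th \in unitmx by rewrite hThL unitmx_mul unitmx_ctmx hL.
  have : Th *m (invmx L *m ctmx (invmx L)) = 1%:M.
    by rewrite {1}hThL ctmx_inv !mulmxA mulmxK // mulmxV ?unitmx_ctmx.
  move/(congr1 (mulmx (invmx Th))); rewrite mulKmx // mulmx1 => <-.
  by rewrite /A mxtrace_mulC !mulmxA.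
have [hle heq] := logdet_le_mxtrace hA.
rewrite -hlndet -htr; split=> // /heq hA1.
by rewrite hTh'A hA1 mulmx1 hThL.
Qed.

End LogDet.

Section Hessian.
Variable R : realType.
Local Notation C := R[i].
Variables (p : nat) (S Thstar : 'M[C]_p).
Hypothesis S_herm : ctmx S = S.
Local Notation M := (Mset Thstar).

Definition supportM (X : 'M[C]_p) := forall q r, ~~ inM Thstar (q, r) -> X q r = 0.

Definition vecM (X : 'M[C]_p) : 'cV[C]_#|M| := \col_j X (enum_val j).1 (enum_val j).2.

Lemma Gamma_sum (X : 'M[C]_p) e :
  \sum_f Gamma S e f * X f.1 f.2 = (S *m X *m S) e.1 e.2.
Proof.
rewrite -(pair_bigA _ (fun q r => Gamma S e (q, r) * X q r)) mxE exchange_big.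
apply: eq_bigr => r _; rewrite mxE mulr_suml; apply: eq_bigr => q _.
by rewrite /Gamma /= -ctmxE S_herm; ring.
Qed.

Lemma sum_Mset (F : 'I_p * 'I_p -> C) : (forall f, ~~ inM Thstar f -> F f = 0) ->
  \sum_(j < #|M|) F (enum_val j) = \sum_f F f.
Proof.
move=> hF; rewrite -(big_enum_val (A := mem M)) [RHS](bigID (mem M)) /=.
by rewrite [X in _ = _ + X]big1 ?addr0 // => f; rewrite inE => /hF.
Qed.

Lemma Gamma_vecM (X : 'M[C]_p) e : supportM X ->
  \sum_j Gamma S e (enum_val j) * vecM X j 0 = (S *m X *m S) e.1 e.2.
Proof.
move=> hX; rewrite -Gamma_sum -sum_Mset => [|[q r] /hX ->]; last by rewrite mulr0.
by apply: eq_bigr => j _; rewrite mxE.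
Qed.

Lemma Gamma_eM_mul (X : 'M[C]_p) e : supportM X ->
  (Gamma_eM S Thstar e *m vecM X) 0 0 = (S *m X *m S) e.1 e.2.
Proof.
move=> hX; rewrite mxE -Gamma_vecM //.
by apply: eq_bigr => j _; rewrite mxE.
Qed.

Lemma Gamma_MM_mul (X : 'M[C]_p) : supportM X ->
  Gamma_MM S Thstar *m vecM X = vecM (S *m X *m S).
Proof.
move=> hX; apply/matrixP => i k; rewrite (ord1 k) [RHS]mxE -Gamma_vecM // mxE.
by apply: eq_bigr => j _; rewrite mxE.
Qed.

Lemma qform_Gamma_MM (X : 'M[C]_p) : supportM X ->
  (ctmx (vecM X) *m Gamma_MM S Thstar *m vecM X) 0 0 = \tr (ctmx X *m (S *m X *m S)).
Proof.
move=> hX; rewrite -mulmxA Gamma_MM_mul // mxE.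
rewrite (eq_bigr (fun j => conjc (X (enum_val j).1 (enum_val j).2) *
                          (S *m X *m S) (enum_val j).1 (enum_val j).2)); last first.
  by move=> j _; rewrite !mxE.
rewrite (sum_Mset (F := fun f => conjc (X f.1 f.2) * (S *m X *m S) f.1 f.2)); last first.
  by move=> [q r] /hX ->; rewrite rmorph0 mul0r.
rewrite -(pair_bigA _ (fun q r => conjc (X q r) * (S *m X *m S) q r)) /=.
rewrite /mxtrace exchange_big; apply: eq_bigr => r _.
by rewrite mxE; apply: eq_bigr => q _; rewrite ctmxE.
Qed.

Lemma vecM_surj (w : 'cV[C]_#|M|) : exists2 X, supportM X & vecM X = w.
Proof.
exists (\matrix_(q, r) \sum_(j | enum_val j == (q, r)) w j 0).
  move=> q r hqr; rewrite mxE big_pred0 // => j.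
  by apply/negP => /eqP hj; have := enum_valP j; rewrite hj inE (negbTE hqr).
apply/matrixP => i k; rewrite (ord1 k) !mxE -surjective_pairing (big_pred1 i) //.
by move=> j /=; rewrite (inj_eq enum_val_inj).
Qed.

Lemma Gamma_MM_unit : hpd S -> Gamma_MM S Thstar \in unitmx.
Proof.
move=> hS; apply: posdef_unitmx => w hw; have [X hX hXw] := vecM_surj w.
have [L hL hSL] := hpd_cholesky hS.
have hY : L *m X *m ctmx L != 0.
  apply: contra hw => /eqP hY; rewrite -hXw.
  have -> : X = invmx L *m (L *m X *m ctmx L) *m invmx (ctmx L).
    by rewrite !mulmxA mulVmx // mul1mx mulmxK ?unitmx_ctmx.
  by rewrite hY mulmx0 mul0mx; apply/eqP/matrixP => i k; rewrite !mxE.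
rewrite -hXw qform_Gamma_MM //.
have -> : \tr (ctmx X *m (S *m X *m S)) =
          \tr (ctmx (L *m X *m ctmx L) *m (L *m X *m ctmx L)).
  by rewrite hSL !ctmx_mul ctmxK !mulmxA mxtrace_mulC !mulmxA.
exact: mxtrace_ctmx_mul_gt0.
Qed.

End Hessian.

Section Certificate.
Variable R : realType.
Local Notation C := R[i].
Local Notation Re := (@complex.Re R).
Variables (p : nat) (Sh Th0 Z : 'M[C]_p) (lam : R).
Hypotheses (lam_gt0 : 0 < lam) (Th0_hpd : hpd Th0)
  (Z_le1 : forall q r, cmod (Z q r) <= 1)
  (ShE : Sh = invmx Th0 - lam%:C *: Z)
  (Z_subgrad : Re (\tr (Z *m Th0)) = \sum_q \sum_r cmod (Th0 q r)).

Lemma Re_mxtrace_le (Th : 'M[C]_p) : Re (\tr (Z *m Th)) <= \sum_q \sum_r cmod (Th q r).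
Proof.
apply: le_trans (Re_le_cmod _) _; apply: le_trans (cmod_sum _) _.
rewrite [leRHS]exchange_big; apply: ler_sum => r _.
rewrite mxE; apply: le_trans (cmod_sum _) _; apply: ler_sum => q _.
by rewrite cmodM ler_piMl ?cmod_ge0.
Qed.

Lemma glasso_objE (Th : 'M[C]_p) : glasso_obj Sh lam Th =
  - ln (Re (\det Th)) + Re (\tr (invmx Th0 *m Th))
  + lam * (\sum_q \sum_r cmod (Th q r) - Re (\tr (Z *m Th))).
Proof.
rewrite /glasso_obj ShE mulmxBl -scalemxAl raddfB /= mxtraceZ.
by rewrite ReD ReN ReMR; ring.
Qed.

Lemma glasso_obj_Th0_le (Th : 'M[C]_p) : hpd Th ->
  glasso_obj Sh lam Th0 <= glasso_obj Sh lam Th /\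
  (glasso_obj Sh lam Th <= glasso_obj Sh lam Th0 -> Th = Th0).
Proof.
move=> hTh; have [hle heq] := logdet_ratio_le Th0_hpd hTh.
have hZ : 0 <= lam * (\sum_q \sum_r cmod (Th q r) - Re (\tr (Z *m Th))).
  by apply: mulr_ge0; [exact: ltW | rewrite subr_ge0 Re_mxtrace_le].
rewrite !glasso_objE Z_subgrad subrr mulr0 mulVmx ?hpd_unitmx // mxtrace1 /=.
have hp : Re p%:R = p%:R by rewrite -(rmorph_nat (real_complex R)).
rewrite hp; split=> [|hge]; first lra.
by apply: heq; lra.
Qed.

Lemma glasso_min_certificate : is_glasso_min Sh lam Th0.
Proof. by split=> // Th /glasso_obj_Th0_le []. Qed.

Lemma glasso_min_unique (Th : 'M[C]_p) : is_glasso_min Sh lam Th -> Th = Th0.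
Proof. by move=> [hTh /(_ _ Th0_hpd)]; have [_] := glasso_obj_Th0_le hTh; apply. Qed.

End Certificate.

Lemma mxtrace_subgradient (R : realType) p (Th Z : 'M[R[i]]_p) : ctmx Th = Th ->
  (forall q r, Z q r * conjc (Th q r) = (cmod (Th q r))%:C) ->
  complex.Re (\tr (Z *m Th)) = \sum_q \sum_r cmod (Th q r).
Proof.
move=> hTh hZ; rewrite /mxtrace (eq_bigr (fun q => (\sum_r cmod (Th q r))%:C)).
  by rewrite -rmorph_sum.
move=> q _; rewrite mxE rmorph_sum; apply: eq_bigr => r _.
by rewrite -{1}hTh ctmxE hZ.
Qed.

Section PrimalDualWitness.
Variable R : realType.
Local Notation C := R[i].
Variables (p : nat) (S Sh Thd Zd : 'M[C]_p) (lam alpha : R).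
Local Notation Ts := (invmx S).
Local Notation W := (Sh - S).
Hypotheses (hS : hpd S) (halpha : 0 < alpha <= 1) (hlam : 0 < lam)
  (hA3 : incoherence S Ts alpha)
  (Thd_hpd : hpd Thd) (Thd_supp : supportM Ts Thd)
  (hZdiag : forall q : 'I_p, Zd q q = 1)
  (hZsub : forall q r : 'I_p, q != r -> inM Ts (q, r) ->
     (Thd q r != 0 -> Zd q r = Thd q r / `|Thd q r|) /\
     (Thd q r = 0 -> cmod (Zd q r) <= 1))
  (hKKT : forall q r : 'I_p, inM Ts (q, r) ->
     Sh q r - invmx Thd q r + lam%:C * Zd q r = 0)
  (hZperp : forall q r : 'I_p, ~~ inM Ts (q, r) ->
     Zd q r = (lam^-1)%:C * (- Sh q r + invmx Thd q r))
  (hbound : Num.max (maxnorm W) (maxnorm (remainder Ts Thd)) <= alpha * lam / 8).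

Lemma cmod_Zd_le1_onM q r : inM Ts (q, r) -> cmod (Zd q r) <= 1.
Proof.
move=> hM; have [->|hqr] := eqVneq q r; first by rewrite hZdiag cmodR normr1.
have [hZ hZ0] := hZsub hqr hM; have [/hZ0 //|hTh] := eqVneq (Thd q r) 0.
rewrite hZ // (_ : cmod _ = 1) //; apply: complexI.
by rewrite -cmodE normf_div normr_id divff ?normr_eq0.
Qed.

Lemma Sh_KKT : Sh = invmx Thd - lam%:C *: Zd.
Proof.
apply/matrixP => q r; rewrite !mxE; case: (boolP (inM Ts (q, r))) => hM.
  by apply/eqP; rewrite -subr_eq0 -(hKKT hM); apply/eqP; ring.
rewrite hZperp // mulrA -rmorphM divff ?gt_eqF // mul1r; ring.
Qed.

(* R(Delta) is the error of linearising Theta^-1 at Thstar = S^-1. *)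
Lemma linearised_KKT :
  S *m (Thd - Ts) *m S = remainder Ts Thd - W - lam%:C *: Zd.
Proof.
by rewrite /remainder invmxK Sh_KKT; apply/matrixP => q r; rewrite !mxE; ring.
Qed.

Local Notation U := (remainder Ts Thd - W - lam%:C *: Zd).

Lemma U_GammaE e :
  U e.1 e.2 = (Gamma_eM S Ts e *m invmx (Gamma_MM S Ts) *m vecM Ts U) 0 0.
Proof.
have S_herm := hpd_ctmx hS.
have Delta_supp : supportM Ts (Thd - Ts).
  move=> q r hM; rewrite !mxE Thd_supp //.
  by move: hM; rewrite /inM negb_or negbK => /andP [_ /eqP ->]; rewrite subr0.
have hGamma : Gamma_MM S Ts *m vecM Ts (Thd - Ts) = vecM Ts U.
  by rewrite Gamma_MM_mul // linearised_KKT.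
rewrite -mulmxA -hGamma mulKmx ?Gamma_MM_unit //.
by rewrite Gamma_eM_mul // linearised_KKT.
Qed.

Lemma cmod_W_le q r : cmod (W q r) <= alpha * lam / 8.
Proof.
by apply: le_trans (cmod_le_maxnorm _ _ _) _; apply: le_trans hbound; rewrite le_max lexx.
Qed.

Lemma cmod_remainder_le q r : cmod (remainder Ts Thd q r) <= alpha * lam / 8.
Proof.
apply: le_trans (cmod_le_maxnorm _ _ _) _; apply: le_trans hbound.
by rewrite le_max lexx orbT.
Qed.

Lemma cmod_U_onM q r : inM Ts (q, r) -> cmod (U q r) <= lam + alpha * lam / 4.
Proof.
move=> hM; have := ler_wpM2l (ltW hlam) (cmod_Zd_le1_onM hM); rewrite mulr1.
have := cmod_W_le q r; have := cmod_remainder_le q r.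
have := cmodD (remainder Ts Thd q r - W q r) (- (lam%:C * Zd q r)).
have := cmodD (remainder Ts Thd q r) (- W q r).
rewrite !mxE !cmodN cmodM cmodR gtr0_norm //; lra.
Qed.

Theorem strict_dual_feasibility q r : ~~ inM Ts (q, r) -> cmod (Zd q r) < 1.
Proof.
move=> hM; case/andP: halpha => ha0 _.
set c := Gamma_eM S Ts (q, r) *m invmx (Gamma_MM S Ts).
have hb : 0 <= lam + alpha * lam / 4 by rewrite addr_ge0 ?ltW ?divr_gt0 ?mulr_gt0.
have hc : cmod ((c *m vecM Ts U) 0 0) <= (1 - alpha) * (lam + alpha * lam / 4).
  apply: le_trans (cmod_mulmx_le _ _ hb) _; last by rewrite ler_wpM2r //; apply: hA3.
  move=> j; rewrite mxE; apply: cmod_U_onM.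
  by rewrite -surjective_pairing; have := enum_valP j; rewrite inE.
have hlamZ : lam%:C * Zd q r = remainder Ts Thd q r - W q r - (c *m vecM Ts U) 0 0.
  by rewrite -(U_GammaE (q, r)) !mxE; ring.
have := cmodD (remainder Ts Thd q r - W q r) (- (c *m vecM Ts U) 0 0).
have := cmodD (remainder Ts Thd q r) (- W q r).
have := cmod_W_le q r; have := cmod_remainder_le q r.
rewrite -hlamZ !cmodN cmodM cmodR gtr0_norm // => hR hW hRW hlamZle.
have hal : 0 < alpha * lam by rewrite mulr_gt0.
by rewrite -(ltr_pM2l hlam) mulr1; nra.
Qed.

Lemma cmod_Zd_le1 q r : cmod (Zd q r) <= 1.
Proof.
case: (boolP (inM Ts (q, r))) => hM; first exact: cmod_Zd_le1_onM.
exact/ltW/strict_dual_feasibility.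
Qed.

Lemma Zd_subgradient q r : Zd q r * conjc (Thd q r) = (cmod (Thd q r))%:C.
Proof.
have [<-|hqr] := eqVneq q r.
  have hpos := hpd_diag_gt0 q Thd_hpd.
  by rewrite hZdiag mul1r conjc_gt0 // -cmodE gtr0_norm.
have [->|hTh] := eqVneq (Thd q r) 0; first by rewrite rmorph0 mulr0 -cmodE normr0.
have hM : inM Ts (q, r) by apply: contraT => /Thd_supp hTh0; rewrite hTh0 eqxx in hTh.
rewrite (proj1 (hZsub hqr hM) hTh) -cmodE mulrAC -sqr_normc expr2 mulfK //.
by rewrite normr_eq0.
Qed.

End PrimalDualWitness.

Unset Implicit Arguments.

Theorem mainTheorem7 (R : realType) (p : nat)
  (S Sh : 'M[R[i]]_p) (lam alpha : R) (Thd Zd : 'M[R[i]]_p)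
  (hS : hpd S) (hSh : hpsd Sh)
  (halpha : 0 < alpha <= 1) (hlam : 0 < lam)
  (hA3 : incoherence S (invmx S) alpha)
  (hThd : is_restricted_min (invmx S) Sh lam Thd)
  (hZdiag : forall q : 'I_p, Zd q q = 1)
  (hZsub : forall q r : 'I_p, q != r -> inM (invmx S) (q, r) ->
     (Thd q r != 0 -> Zd q r = Thd q r / `|Thd q r|) /\
     (Thd q r = 0 -> cmod (Zd q r) <= 1))
  (hKKT : forall q r : 'I_p, inM (invmx S) (q, r) ->
     Sh q r - invmx Thd q r + (lam%:C)%C * Zd q r = 0)
  (hZperp : forall q r : 'I_p, ~~ inM (invmx S) (q, r) ->
     Zd q r = ((lam^-1)%:C)%C * (- Sh q r + invmx Thd q r))
  (hbound : Num.max (maxnorm (Sh - S)) (maxnorm (remainder (invmx S) Thd))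
              <= alpha * lam / 8) :
  (forall q r : 'I_p, ~~ inM (invmx S) (q, r) -> cmod (Zd q r) < 1) /\
  is_glasso_min Sh lam Thd /\
  (forall Th : 'M[R[i]]_p, is_glasso_min Sh lam Th -> Th = Thd).
Proof.
have [Thd_hpd Thd_supp _] := hThd.
have Zd_le1 := cmod_Zd_le1 hS halpha hlam hA3 Thd_supp hZdiag hZsub hKKT hZperp hbound.
have Sh_eq := Sh_KKT hlam hKKT hZperp.
have Zd_subgrad : complex.Re (\tr (Zd *m Thd)) = \sum_q \sum_r cmod (Thd q r).
  exact: mxtrace_subgradient (hpd_ctmx Thd_hpd)
                             (Zd_subgradient Thd_hpd Thd_supp hZdiag hZsub).
split; first exact: strict_dual_feasibility hS halpha hlam hA3 Thd_supp
                                            hZdiag hZsub hKKT hZperp hbound.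
split; first exact: glasso_min_certificate hlam Thd_hpd Zd_le1 Sh_eq Zd_subgrad.
by move=> Th /(glasso_min_unique hlam Thd_hpd Zd_le1 Sh_eq Zd_subgrad).
Qed.
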